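(* Let $\{(\phi^n,\mu^n,R^n)\}$ be generated by Scheme 1A and set $M:=R^0=\sqrt{E[\phi_{in}]}$. Then for all $n\ge 0$: $0<R^{n+1}\le R^n\le M$, and $0<\xi^{n+1}\le \frac{M}{\sqrt{c_0}}$.
   Context: Standing setup: $\Omega\subset\mathbb{R}^d$ ($d=2,3$) is a bounded domain with smooth boundary and outward unit normal $\mathbf{n}$; $\|\cdot\|_0$ is the $L^2(\Omega)$ norm. Let $\lambda\ge 0$, $H(s)=\frac14(s^2-1)^2$, $h(s)=s^3-s$. Fix $c_0>0$ and define $E[\phi]=\int_\Omega\big(\tfrac12|\nabla\phi|^2+\tfrac{\lambda}{2}\phi^2+H(\phi)\big)dx+c_0$ (so $E[\phi]\ge c_0$). Time step $\Delta t>0$. Set $\phi^0=\phi_{in}$, $\mu^0=-\Delta\phi^0+\lambda\phi^0+h(\phi^0)$, $R^0=\sqrt{E[\phi^0]}$. Scheme 1A: for $n\ge0$, $\frac{\phi^{n+1}-\phi^n}{\Delta t}=\Delta\mu^{n+1}$, $\mu^{n+1}=-\Delta\phi^{n+1}+\lambda\phi^{n+1}+|\xi^{n+1}|^2h(\phi^n)$, $\frac{R^{n+1}-R^n}{\Delta t}=-\frac{\xi^{n+1}}{2\sqrt{E[\phi^n]}}\int_\Omega|\nabla\mu^n|^2dx$, with $\xi^{n+1}=R^{n+1}/\sqrt{E[\phi^n]}$, and $\nabla\phi^{n+1}\cdot\mathbf{n}=\nabla\mu^{n+1}\cdot\mathbf{n}=0$ on $\partial\Omega$. *)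

From HB Require Import structures.
From mathcomp Require Import all_boot all_order all_algebra.
From mathcomp Require Import all_classical all_reals all_analysis.
Set Implicit Arguments. Unset Strict Implicit. Unset Printing Implicit Defensive.
Import Order.TTheory GRing.Theory Num.Theory.
Import numFieldNormedType.Exports.
Local Open Scope classical_set_scope.
Local Open Scope ring_scope.

Section Scheme1A.
Variable R : realType.

Definition ebasis (d : nat) (i : 'I_d) : 'rV[R]_d := delta_mx 0 i.

Definition pd (d : nat) (i : 'I_d) (f : 'rV[R]_d -> R) : 'rV[R]_d -> R :=
  fun x => 'D_(ebasis i) f x.

Definition grad (d : nat) (f : 'rV[R]_d -> R) (x : 'rV[R]_d) : 'rV[R]_d :=
  \row_i pd i f x.

Definition lap (d : nat) (f : 'rV[R]_d -> R) (x : 'rV[R]_d) : R :=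
  \sum_(i < d) pd i (pd i f) x.

Definition dotv (d : nat) (u v : 'rV[R]_d) : R := \sum_(i < d) u 0 i * v 0 i.
Definition sqnorm (d : nat) (u : 'rV[R]_d) : R := dotv u u.

(* Lebesgue integral over R^d, written as the iterated one-dimensional
   Lebesgue integrals (Fubini) *)
Fixpoint iint (d : nat) : ('rV[R]_d -> R) -> R :=
  match d return ('rV[R]_d -> R) -> R with
  | 0 => fun f => f 0
  | d'.+1 => fun f =>
      Rintegral (@lebesgue_measure R) setT
        (fun t : R => iint (fun v : 'rV[R]_d' => f (row_mx (const_mx t : 'rV[R]_1) v)))
  end.

Definition intO (d : nat) (Omega : set 'rV[R]_d) (f : 'rV[R]_d -> R) : R :=
  iint (fun x => \1_Omega x * f x).

Definition Hpot (s : R) : R := (s ^+ 2 - 1) ^+ 2 / 4.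
Definition hpot (s : R) : R := s ^+ 3 - s.

Definition Energy (d : nat) (Omega : set 'rV[R]_d) (lam c0 : R)
  (phi : 'rV[R]_d -> R) : R :=
  intO Omega (fun x => sqnorm (grad phi x) / 2 + lam / 2 * phi x ^+ 2
                       + Hpot (phi x)) + c0.

Definition bdry (d : nat) (Omega : set 'rV[R]_d) : set 'rV[R]_d :=
  closure Omega `\` interior Omega.

End Scheme1A.

From HB Require Import structures.
From mathcomp Require Import all_boot all_order all_algebra.
From mathcomp Require Import all_classical all_reals all_analysis.
From mathcomp Require Import ring lra.
Set Implicit Arguments. Unset Strict Implicit. Unset Printing Implicit Defensive.
Import Order.TTheory GRing.Theory Num.Theory.
Import numFieldNormedType.Exports.
Local Open Scope classical_set_scope.
Local Open Scope ring_scope.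

(* Only two facts about the scheme are used. The modified energy is bounded below: E[phi] >= c0 > 0 for every phi,
      because the integrand |grad phi|^2/2 + lam/2 phi^2 + H(phi) is
      nonnegative.  Hence S_n := sqrt(E[phi^n]) >= sqrt c0 > 0.
   2. The R-update is linear in R^{n+1}.  With I_n := int |grad mu^n|^2 >= 0 it
      reads R^{n+1} (1 + dt I_n / (2 S_n^2)) = R^n, so R^{n+1} is R^n divided
      by a factor >= 1: positivity propagates and R decreases. *)

Section Nonnegativity.
Variable R : realType.

Lemma iint_ge0 (d : nat) (f : 'rV[R]_d -> R) :
  (forall x, 0 <= f x) -> 0 <= iint f.
Proof.
elim: d f => [|d IH] f f_ge0 /=; first exact: f_ge0.
by apply: Rintegral_ge0 => t _; apply: IH.
Qed.

Lemma intO_ge0 (d : nat) (Omega : set 'rV[R]_d) (f : 'rV[R]_d -> R) :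
  (forall x, 0 <= f x) -> 0 <= intO Omega f.
Proof. by move=> f_ge0; apply: iint_ge0 => x; apply: mulr_ge0. Qed.

Lemma sqnorm_ge0 (d : nat) (u : 'rV[R]_d) : 0 <= sqnorm u.
Proof. by apply: sumr_ge0 => i _; rewrite -expr2 sqr_ge0. Qed.

Lemma Energy_ge_shift (d : nat) (Omega : set 'rV[R]_d) (lam c0 : R)
    (phi : 'rV[R]_d -> R) :
  0 <= lam -> c0 <= Energy Omega lam c0 phi.
Proof.
move=> lam_ge0; rewrite /Energy lerDr; apply: intO_ge0 => x.
have H_ge0 : 0 <= Hpot (phi x) by rewrite /Hpot divr_ge0 ?sqr_ge0.
have grad_ge0 : 0 <= sqnorm (grad phi x) / 2 by rewrite divr_ge0 ?sqnorm_ge0.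
have quad_ge0 : 0 <= lam / 2 * phi x ^+ 2 by rewrite mulr_ge0 ?divr_ge0 ?sqr_ge0.
by rewrite !addr_ge0.
Qed.

End Nonnegativity.

Section AuxiliaryVariable.
Variables (R : realType) (dt : R).
Hypothesis dt_gt0 : 0 < dt.

(* One step of the R-update, with S = sqrt(E[phi^n]) and I = int |grad mu^n|^2:
   the new value r' times the amplification factor 1 + dt I / (2 S^2) is the
   old value r. *)
Lemma R_update_linear (S I r r' : R) : 0 < S ->
  (r' - r) / dt = - (r' / S / (2 * S)) * I ->
  r' * (1 + dt * I / (2 * S * S)) = r.
Proof.
move=> S_gt0 update.
have S_neq0 : S != 0 by rewrite gt_eqF.
have diff : r' - r = - (r' / S / (2 * S)) * I * dt
  by rewrite -update mulfVK // gt_eqF.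
apply/eqP; rewrite -subr_eq0; apply/eqP.
have -> : r' * (1 + dt * I / (2 * S * S)) - r =
          (r' - r) + r' * (dt * I / (2 * S * S)) by ring.
by rewrite diff; field.
Qed.

(* Since the amplification factor is >= 1, one step preserves positivity and
   does not increase R. *)
Lemma R_update_decay (S I r r' : R) : 0 < S -> 0 <= I -> 0 < r ->
  (r' - r) / dt = - (r' / S / (2 * S)) * I ->
  0 < r' /\ r' <= r.
Proof.
move=> S_gt0 I_ge0 r_gt0 update.
have a_ge0 : 0 <= dt * I / (2 * S * S).
  by rewrite divr_ge0 ?mulr_ge0 // ltW // !mulr_gt0.
have factor_gt0 : 0 < 1 + dt * I / (2 * S * S) by lra.
have solved : r' = r / (1 + dt * I / (2 * S * S))
  by rewrite -(R_update_linear S_gt0 update) mulfK // gt_eqF.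
split; first by rewrite solved divr_gt0.
by rewrite solved ler_pdivrMr //; nra.
Qed.

Lemma R_sequence_decay (Rs S I : nat -> R) :
  (forall n, 0 < S n) -> (forall n, 0 <= I n) -> 0 < Rs 0%N ->
  (forall n, (Rs n.+1 - Rs n) / dt = - (Rs n.+1 / S n / (2 * S n)) * I n) ->
  forall n, 0 < Rs n.+1 /\ Rs n.+1 <= Rs n /\ Rs n <= Rs 0%N.
Proof.
move=> S_gt0 I_ge0 R0_gt0 update.
have bounded : forall n, 0 < Rs n /\ Rs n <= Rs 0%N.
  elim=> [|n [Rn_gt0 Rn_le]]; first by [].
  have [Rn1_gt0 Rn1_le] := R_update_decay (S_gt0 n) (I_ge0 n) Rn_gt0 (update n).
  by split; last exact: le_trans Rn1_le Rn_le.
move=> n; have [Rn_gt0 Rn_le] := bounded n.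
have [Rn1_gt0 Rn1_le] := R_update_decay (S_gt0 n) (I_ge0 n) Rn_gt0 (update n).
by split; last split.
Qed.

End AuxiliaryVariable.

Lemma ratio_bound (R : realType) (r M S s0 : R) :
  0 < r -> r <= M -> 0 < s0 -> s0 <= S -> 0 < r / S /\ r / S <= M / s0.
Proof.
move=> r_gt0 r_le s0_gt0 s0_le.
have S_gt0 : 0 < S := lt_le_trans s0_gt0 s0_le.
split; first by rewrite divr_gt0.
have M_ge0 : 0 <= M := le_trans (ltW r_gt0) r_le.
rewrite ler_pdivrMr //; apply: le_trans r_le _.
rewrite -{1}(divfK (lt0r_neq0 s0_gt0) M).
by apply: ler_wpM2l; first exact: divr_ge0 M_ge0 (ltW s0_gt0).
Qed.

Theorem mainTheorem2 (R : realType) (d : nat) (Omega : set 'rV[R]_d)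
  (nrm : 'rV[R]_d -> 'rV[R]_d) (lam c0 dt : R)
  (phi_in : 'rV[R]_d -> R)
  (phi mu : nat -> 'rV[R]_d -> R) (Rs : nat -> R) :
  (d = 2%N \/ d = 3%N) ->
  open Omega -> bounded_set Omega -> connected Omega -> Omega !=set0 ->
  (forall x, bdry Omega x -> sqnorm (nrm x) = 1) ->
  0 <= lam -> 0 < c0 -> 0 < dt ->
  let E := Energy Omega lam c0 in
  let xi := fun n : nat => Rs n.+1 / Num.sqrt (E (phi n)) in
  phi 0%N = phi_in ->
  (forall x, Omega x ->
     mu 0%N x = - lap (phi 0%N) x + lam * phi 0%N x + hpot (phi 0%N x)) ->
  Rs 0%N = Num.sqrt (E (phi 0%N)) ->
  (forall n x, Omega x ->
     (phi n.+1 x - phi n x) / dt = lap (mu n.+1) x) ->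
  (forall n x, Omega x ->
     mu n.+1 x = - lap (phi n.+1) x + lam * phi n.+1 x
                 + (xi n) ^+ 2 * hpot (phi n x)) ->
  (forall n, (Rs n.+1 - Rs n) / dt =
     - (xi n / (2 * Num.sqrt (E (phi n))))
       * intO Omega (fun x => sqnorm (grad (mu n) x))) ->
  (forall n x, bdry Omega x ->
     dotv (grad (phi n.+1) x) (nrm x) = 0 /\
     dotv (grad (mu n.+1) x) (nrm x) = 0) ->
  let M := Rs 0%N in
  forall n : nat,
    (0 < Rs n.+1 /\ Rs n.+1 <= Rs n /\ Rs n <= M) /\
    (0 < xi n /\ xi n <= M / Num.sqrt c0).
Proof.
move=> _ _ _ _ _ _ lam_ge0 c0_gt0 dt_gt0 E xi _ _ R0_def _ _ R_update _ M n.
have sqrt_c0_gt0 : 0 < Num.sqrt c0 by rewrite sqrtr_gt0.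
have sqrt_E_ge : forall k, Num.sqrt c0 <= Num.sqrt (E (phi k)).
  by move=> k; rewrite ler_sqrt ?Energy_ge_shift //; apply: le_trans (ltW c0_gt0) _;
     apply: Energy_ge_shift.
have sqrt_E_gt0 : forall k, 0 < Num.sqrt (E (phi k)).
  by move=> k; apply: lt_le_trans (sqrt_E_ge k).
have R0_gt0 : 0 < Rs 0%N by rewrite R0_def; apply: sqrt_E_gt0.
have [R_gt0 [R_dec R_le]] := R_sequence_decay dt_gt0 sqrt_E_gt0
  (fun k => intO_ge0 Omega (fun x => sqnorm_ge0 (grad (mu k) x))) R0_gt0 R_update n.
split; first by [].
exact: ratio_bound R_gt0 (le_trans R_dec R_le) sqrt_c0_gt0 (sqrt_E_ge n).
Qed.
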